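(* Let $\gamma>1$, $j\in\{0,1,2\}$, $J(x)=\int_1^x r^{-j/2}\,dr$, and let $v:\mathbb R\to\mathbb R$ be $C^1$. Suppose $s$ and $\tau_-$ are $C^1$ functions on $[1,\infty)$ with $\tau_-(1)=0$, satisfying for all $x\ge1$ $$s'(x)=1-\frac{\gamma+1}{4}v(\tau_-(x))\,x^{-j/2},\qquad s(x)-\tau_-(x)=x-1-\frac{\gamma+1}{2}v(\tau_-(x))J(x).$$ Then for all $x\ge1$ $$\frac{\gamma+1}{4}v(\tau_-(x))^2J(x)=\int_0^{\tau_-(x)}v(s)\,ds.$$ Consequently, if $v(\tau_-(x))>0$ for large $x$ and $\int_0^{\tau_-(x)}v(s)\,ds\to b>0$ as $x\to\infty$, then the velocity jump $[u]=x^{-j/2}v(\tau_-(x))$ satisfies $$[u]\sim\Big(\frac{4b}{(\gamma+1)J(x)}\Big)^{1/2}x^{-j/2}\sim\Big(\frac{4b}{\gamma+1}\Big)^{1/2}\begin{cases}x^{-1/2},&j=0,\\ \tfrac{1}{\sqrt2}x^{-3/4},&j=1,\\ x^{-1}(\log x)^{-1/2},&j=2.\end{cases}$$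
   Context: Setting: leading-order modulated simple wave $u=v(\tau)x^{-j/2}$ on forward characteristics $t-\tau=x-1-\frac{\gamma+1}{2}v(\tau)J(x)$ (wavelets labelled by $\tau$, the time at which they leave $x=1$), with $v$ the boundary data $u(1,\tau)$. A weak shock $t=s(x)$ moves into gas at rest; $\tau_-(x)$ is the label of the wavelet immediately behind the shock at position $x$, and the first relation is the weak-shock speed law $1/U\approx1-\frac{\gamma+1}{4}[u]$. *)

From Stdlib Require Import Reals Lra.
Open Scope R_scope.

Definition is_RInt (f : R -> R) (a b I : R) : Prop :=
  exists pr : Riemann_integrable f a b, RiemannInt pr = I.

Definition half_line (y : R) : Prop := 1 <= y.

Definition C1_R (f : R -> R) : Prop :=
  exists df : R -> R, (forall t, derivable_pt_lim f t (df t)) /\ continuity df.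

(* f is C^1 on the closed half-line [1,+oo): continuous on [1,oo) (within),
   differentiable on (1,oo), with derivative extending continuously to [1,oo). *)
Definition C1_half (f : R -> R) : Prop :=
  exists df : R -> R,
    (forall x, 1 < x -> derivable_pt_lim f x (df x)) /\
    (forall x, 1 <= x -> continue_in f half_line x) /\
    (forall x, 1 <= x -> continue_in df half_line x).

Definition xpow (j : nat) (x : R) : R := Rpower x (- INR j / 2).

Definition asymp (f g : R -> R) : Prop :=
  forall eps, 0 < eps -> exists M, forall x, M <= x -> Rabs (f x / g x - 1) < eps.

(* the explicit model asymptotics (without the constant (4b/(gamma+1))^{1/2}) *)
Definition model_rate (j : nat) (x : R) : R :=
  match j with
  | 0%nat => Rpower x (-1/2)
  | 1%nat => / sqrt 2 * Rpower x (-3/4)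
  | _ => / x * / sqrt (ln x)
  end.

(* Along the shock path the quantity
       E(x) = (gamma+1)/4 * v(tau(x))^2 * J(x) - int_0^{tau(x)} v
   has zero derivative: differentiating the characteristic relation
   s - tau = x - 1 - (gamma+1)/2 v(tau) J and inserting the shock law for s'
   gives a linear relation for tau' which is exactly E' = 0.  As E is
   continuous at x = 1 (within [1,+oo)) and E(1) = 0, E vanishes identically
   (lemma [energy_identity], proved in a section for an arbitrary weight p
   with primitive J).  The asymptotics then follow by squaring ratios:
   [jump_asymp] turns  k w^2 J -> b  into  w ~ sqrt(b/(kJ)), and
   [model_asymp] compares x^{-j/2} J(x)^{-1/2} with the explicit model rates
   using the closed forms J = x - 1, 2 sqrt x - 2, ln x for j = 0, 1, 2. *)
From Pilot Require Import Defs.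
From Stdlib Require Import Reals Lra Lia.
From Coquelicot Require Import Coquelicot.
Open Scope R_scope.

Lemma C1_R_continuity (f : R -> R) : C1_R f -> forall t, continuity_pt f t.
Proof.
  intros [df [Hdf _]] t.
  exact (derivable_continuous_pt f t (exist _ (df t) (Hdf t))).
Qed.

Lemma is_RInt_RInt (f : R -> R) (a b I : R) : Defs.is_RInt f a b I -> I = RInt f a b.
Proof. intros [pr <-]. symmetry. apply RInt_Reals. Qed.

Lemma is_RInt_of_continuity (f : R -> R) (a b : R) :
  (forall t, Rmin a b <= t <= Rmax a b -> continuity_pt f t) ->
  Defs.is_RInt f a b (RInt f a b).
Proof.
  intros Hc.
  assert (pr : Riemann_integrable f a b).
  { apply ex_RInt_Reals_0, (ex_RInt_continuous (V := R_CompleteNormedModule)).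
    intros t Ht. apply continuity_pt_filterlim, Hc, Ht. }
  exists pr. symmetry. apply RInt_Reals.
Qed.

Lemma RInt_derivable (f : R -> R) (lo a y : R) :
  lo < a -> lo < y -> (forall t, lo < t -> continuity_pt f t) ->
  derivable_pt_lim (fun z => RInt f a z) y (f y).
Proof.
  intros Ha Hy Hc. apply is_derive_Reals.
  apply (is_derive_RInt f (RInt f a) a).
  - exists (mkposreal (y - lo) ltac:(lra)). intros z Hz.
    change (Rabs (z - y) < y - lo) in Hz. apply Rabs_lt_between' in Hz.
    apply (RInt_correct (V := R_CompleteNormedModule)),
      (ex_RInt_continuous (V := R_CompleteNormedModule)).
    intros t [Ht _]. apply continuity_pt_filterlim, Hc.
    unfold Rmin in Ht. destruct (Rle_dec a z); lra.
  - apply continuity_pt_filterlim, Hc, Hy.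
Qed.

Lemma derivable_pt_lim_ext_right (f g : R -> R) (a x l : R) :
  a < x -> (forall y, a < y -> f y = g y) ->
  derivable_pt_lim f x l -> derivable_pt_lim g x l.
Proof.
  intros Hx Hfg Hf. apply is_derive_Reals. apply is_derive_Reals in Hf.
  apply (is_derive_ext_loc f g x l); [|exact Hf].
  exists (mkposreal (x - a) ltac:(lra)). intros y Hy.
  change (Rabs (y - x) < x - a) in Hy. apply Rabs_lt_between' in Hy.
  apply Hfg. lra.
Qed.

Lemma limit1_in_continuity (f : R -> R) (D : R -> Prop) (x0 : R) :
  continuity_pt f x0 -> limit1_in f D (f x0) x0.
Proof.
  intros Hf eps Heps. destruct (Hf eps Heps) as [d [Hd Hclose]].
  exists d. split; [exact Hd|]. intros y [_ Hy].
  destruct (Req_dec x0 y) as [<-|Hne].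
  - simpl. unfold R_dist. rewrite Rminus_diag, Rabs_R0. exact Heps.
  - apply Hclose. split; [split; [exact I|exact Hne]|exact Hy].
Qed.

Lemma limit1_in_comp_continuity (f g : R -> R) (D : R -> Prop) (x0 : R) :
  limit1_in f D (f x0) x0 -> continuity_pt g (f x0) ->
  limit1_in (fun y => g (f y)) D (g (f x0)) x0.
Proof.
  intros Hf Hg eps Heps. destruct (Hg eps Heps) as [d [Hd Hclose]].
  destruct (Hf d Hd) as [c [Hc Hfc]]. exists c. split; [exact Hc|].
  intros y Hy. specialize (Hfc y Hy).
  destruct (Req_dec (f x0) (f y)) as [E|Hne].
  - simpl. unfold R_dist. rewrite E, Rminus_diag, Rabs_R0. exact Heps.
  - apply Hclose. split; [split; [exact I|exact Hne]|exact Hfc].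
Qed.

Lemma continue_in_agree (f g : R -> R) :
  (forall y, 1 <= y -> f y = g y) -> continuity_pt g 1 -> continue_in f half_line 1.
Proof.
  intros Hfg Hg eps Heps. destruct (limit1_in_continuity g (D_x half_line 1) 1 Hg eps Heps)
    as [d [Hd Hclose]].
  exists d. split; [exact Hd|]. intros y [[Hy Hy1] Hyd].
  rewrite !Hfg by (unfold half_line in Hy; lra). apply Hclose. split; [split|]; auto.
Qed.

Lemma constant_on_half_line (F : R -> R) :
  (forall x, 1 < x -> derivable_pt_lim F x 0) -> continue_in F half_line 1 ->
  forall x, 1 <= x -> F x = F 1.
Proof.
  intros HF Hc x Hx.
  assert (Hplateau : forall y, 1 < y < x -> F x = F y).
  { intros y Hy. destruct (MVT_gen F y x (fun _ => 0)) as [z [_ Hz]].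
    - rewrite Rmin_left, Rmax_right by lra. intros z Hz. apply is_derive_Reals, HF. lra.
    - rewrite Rmin_left, Rmax_right by lra. intros z Hz.
      exact (derivable_continuous_pt F z (exist _ 0 (HF z ltac:(lra)))).
    - lra. }
  destruct (Req_dec x 1) as [->|Hx1]; [reflexivity|].
  destruct (Req_dec (F x) (F 1)) as [E|Hne]; [exact E|exfalso].
  assert (Hgap : 0 < Rabs (F x - F 1)) by (apply Rabs_pos_lt; lra).
  destruct (Hc _ Hgap) as [d [Hd Hclose]].
  set (y := 1 + Rmin d (x - 1) / 2).
  assert (Hm := Rmin_l d (x - 1)). assert (Hm' := Rmin_r d (x - 1)).
  assert (Hm0 : 0 < Rmin d (x - 1)) by (apply Rmin_glb_lt; lra).
  assert (Hy : F y = F x) by (symmetry; apply Hplateau; unfold y; lra).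
  assert (Rabs (F y - F 1) < Rabs (F x - F 1)); [|rewrite Hy in *; lra].
  apply Hclose. split.
  - split; unfold half_line, y; lra.
  - simpl. unfold R_dist. rewrite Rabs_right; unfold y; lra.
Qed.

Section EnergyIdentity.

(* [a] is the shock coefficient (gamma+1)/4, [p] the geometric weight x^{-j/2}
   and [J] its primitive vanishing at 1. *)
Variables (a : R) (p J v dv s tau dtau : R -> R).
Hypothesis Hv : forall t, derivable_pt_lim v t (dv t).
Hypothesis Htau_der : forall x, 1 < x -> derivable_pt_lim tau x (dtau x).
Hypothesis Htau_cont : continue_in tau half_line 1.
Hypothesis Htau1 : tau 1 = 0.
Hypothesis HJ_der : forall x, 1 < x -> derivable_pt_lim J x (p x).
Hypothesis HJ_cont : continue_in J half_line 1.
Hypothesis HJ1 : J 1 = 0.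
Hypothesis Hshock : forall x, 1 < x ->
  derivable_pt_lim s x (1 - a * v (tau x) * p x).
Hypothesis Hchar : forall x, 1 <= x ->
  s x - tau x = x - 1 - 2 * a * v (tau x) * J x.

Let G (t : R) : R := a * v t ^ 2.
Let energy (x : R) : R := G (tau x) * J x - RInt v 0 (tau x).

Lemma G_derivable (t : R) : derivable_pt_lim G t (a * (2 * v t * dv t)).
Proof.
  replace (a * (2 * v t * dv t)) with (a * (INR 2 * v t ^ 1 * dv t)) by (simpl; ring).
  apply (derivable_pt_lim_scal (fun t => v t ^ 2)).
  replace (INR 2 * v t ^ 1 * dv t) with ((INR 2 * v t ^ Init.Nat.pred 2) * dv t) by (simpl; ring).
  apply (derivable_pt_lim_comp v (fun u => u ^ 2)); [apply Hv|apply derivable_pt_lim_pow].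
Qed.

Lemma mass_derivable (t : R) : derivable_pt_lim (fun z => RInt v 0 z) t (v t).
Proof.
  apply (RInt_derivable v (Rmin 0 t - 1)).
  - assert (Rmin 0 t <= 0) by apply Rmin_l. lra.
  - assert (Rmin 0 t <= t) by apply Rmin_r. lra.
  - intros u _. exact (derivable_continuous_pt v u (exist _ (dv u) (Hv u))).
Qed.

(* Differentiating the characteristic relation and inserting the shock law
   yields a linear relation for tau' which is exactly energy' = 0. *)
Lemma energy_derivable (x : R) : 1 < x -> derivable_pt_lim energy x 0.
Proof.
  intros Hx.
  assert (Hw : derivable_pt_lim (fun y => v (tau y)) x (dv (tau x) * dtau x)).
  { apply (derivable_pt_lim_comp tau v); [apply Htau_der, Hx|apply Hv]. }
  assert (Hlhs : derivable_pt_lim (fun y => s y - tau y) x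
                   ((1 - a * v (tau x) * p x) - dtau x)).
  { apply derivable_pt_lim_minus; [apply Hshock|apply Htau_der]; exact Hx. }
  assert (Hrhs : derivable_pt_lim (fun y => y - 1 - 2 * a * v (tau y) * J y) x
       ((1 - 0) - ((0 * v (tau x) + 2 * a * (dv (tau x) * dtau x)) * J x
                   + 2 * a * v (tau x) * p x))).
  { apply derivable_pt_lim_minus.
    - apply derivable_pt_lim_minus; [apply derivable_pt_lim_id|apply derivable_pt_lim_const].
    - apply (derivable_pt_lim_mult (fun y => 2 * a * v (tau y)) J); [|apply HJ_der, Hx].
      apply (derivable_pt_lim_mult (fun _ => 2 * a) (fun y => v (tau y)));
        [apply derivable_pt_lim_const|exact Hw]. }
  assert (Htau' : dtau x = 2 * a * dv (tau x) * dtau x * J x + a * v (tau x) * p x).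
  { apply (derivable_pt_lim_ext_right _ (fun y => y - 1 - 2 * a * v (tau y) * J y) 1 x _ Hx) in Hlhs;
      [|intros y Hy; apply Hchar; lra].
    pose proof (uniqueness_limite _ _ _ _ Hlhs Hrhs). lra. }
  assert (HE : derivable_pt_lim energy x
       ((a * (2 * v (tau x) * dv (tau x)) * dtau x) * J x + G (tau x) * p x
        - v (tau x) * dtau x)).
  { apply (derivable_pt_lim_minus (fun y => G (tau y) * J y) (fun y => RInt v 0 (tau y))).
    - apply (derivable_pt_lim_mult (fun y => G (tau y)) J); [|apply HJ_der, Hx].
      apply (derivable_pt_lim_comp tau G); [apply Htau_der, Hx|apply G_derivable].
    - apply (derivable_pt_lim_comp tau (fun z => RInt v 0 z));
        [apply Htau_der, Hx|apply mass_derivable]. }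
  replace 0 with ((a * (2 * v (tau x) * dv (tau x)) * dtau x) * J x + G (tau x) * p x
                  - v (tau x) * dtau x); [exact HE|].
  (* energy' = v(tau) * (right-hand side of Htau' - tau') *)
  unfold G. rewrite Htau' at 2. ring.
Qed.

Lemma energy_continue_in : continue_in energy half_line 1.
Proof.
  apply (limit_minus (fun y => G (tau y) * J y) (fun y => RInt v 0 (tau y))).
  - apply (limit_mul (fun y => G (tau y)) J); [|exact HJ_cont].
    apply limit1_in_comp_continuity; [exact Htau_cont|].
    exact (derivable_continuous_pt G _ (exist _ _ (G_derivable _))).
  - apply limit1_in_comp_continuity; [exact Htau_cont|].
    exact (derivable_continuous_pt _ _ (exist _ _ (mass_derivable _))).
Qed.

Lemma energy_identity (x : R) :
  1 <= x -> a * v (tau x) ^ 2 * J x = RInt v 0 (tau x).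
Proof.
  intros Hx.
  assert (HE := constant_on_half_line energy energy_derivable energy_continue_in x Hx).
  unfold energy in HE. rewrite Htau1, HJ1, RInt_point in HE.
  unfold G in HE. change (@zero R_CompleteNormedModule) with 0 in HE. lra.
Qed.

End EnergyIdentity.

Lemma xpow_pos (j : nat) (x : R) : 0 < xpow j x.
Proof. unfold xpow, Rpower. apply exp_pos. Qed.

Lemma xpow_continuity (j : nat) (x : R) : 0 < x -> continuity_pt (xpow j) x.
Proof.
  intros Hx. apply (derivable_continuous_pt _ _ (exist _ _ (derivable_pt_lim_power x _ Hx))).
Qed.

Lemma xpow_0 (x : R) : 0 < x -> xpow 0 x = 1.
Proof. intros Hx. unfold xpow. replace (- INR 0 / 2) with 0 by (simpl; field). apply Rpower_O, Hx. Qed.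

Lemma xpow_1 (x : R) : 0 < x -> xpow 1 x = / sqrt x.
Proof.
  intros Hx. unfold xpow. replace (- INR 1 / 2) with (- / 2) by (simpl; field).
  rewrite Rpower_Ropp, Rpower_sqrt; auto.
Qed.

Lemma xpow_2 (x : R) : 0 < x -> xpow 2 x = / x.
Proof.
  intros Hx. unfold xpow. replace (- INR 2 / 2) with (Ropp 1) by (simpl; field).
  rewrite Rpower_Ropp, Rpower_1; auto.
Qed.

Lemma RInt_xpow_pos (j : nat) (x : R) : 1 < x -> 0 < RInt (xpow j) 1 x.
Proof.
  intros Hx. apply RInt_gt_0; [exact Hx|intros; apply xpow_pos|].
  intros t Ht. apply continuity_pt_filterlim, xpow_continuity. lra.
Qed.

Lemma RInt_xpow_antiderivative (j : nat) (F : R -> R) (x : R) : 1 <= x ->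
  (forall t, 1 <= t -> derivable_pt_lim F t (xpow j t)) ->
  RInt (xpow j) 1 x = F x - F 1.
Proof.
  intros Hx HF. apply (is_RInt_unique (V := R_CompleteNormedModule)).
  apply (is_RInt_derive (V := R_CompleteNormedModule) F (xpow j));
    rewrite Rmin_left, Rmax_right by lra; intros t Ht.
  - apply is_derive_Reals, HF. lra.
  - apply continuity_pt_filterlim, xpow_continuity. lra.
Qed.

Lemma RInt_xpow_0 (x : R) : 1 <= x -> RInt (xpow 0) 1 x = x - 1.
Proof.
  intros Hx. apply (RInt_xpow_antiderivative 0 (fun t => t)); [exact Hx|].
  intros t Ht. rewrite xpow_0 by lra. apply derivable_pt_lim_id.
Qed.

Lemma RInt_xpow_1 (x : R) : 1 <= x -> RInt (xpow 1) 1 x = 2 * sqrt x - 2.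
Proof.
  intros Hx. rewrite (RInt_xpow_antiderivative 1 (fun t => 2 * sqrt t) x Hx); [rewrite sqrt_1; lra|].
  intros t Ht. rewrite xpow_1 by lra. assert (Hs := sqrt_lt_R0 t ltac:(lra)).
  replace (/ sqrt t) with (2 * / (2 * sqrt t)) by (field; lra).
  apply (derivable_pt_lim_scal sqrt), derivable_pt_lim_sqrt. lra.
Qed.

Lemma RInt_xpow_2 (x : R) : 1 <= x -> RInt (xpow 2) 1 x = ln x.
Proof.
  intros Hx. rewrite (RInt_xpow_antiderivative 2 ln x Hx); [rewrite ln_1; lra|].
  intros t Ht. rewrite xpow_2 by lra. apply derivable_pt_lim_ln. lra.
Qed.

Section WeightPrimitive.

Variables (j : nat) (J : R -> R).
Hypothesis HJ : forall x, 1 <= x -> Defs.is_RInt (xpow j) 1 x (J x).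

Lemma J_eq_RInt (x : R) : 1 <= x -> J x = RInt (xpow j) 1 x.
Proof. intros Hx. exact (is_RInt_RInt _ _ _ _ (HJ x Hx)). Qed.

Lemma J_pos (x : R) : 1 < x -> 0 < J x.
Proof. intros Hx. rewrite J_eq_RInt by lra. apply RInt_xpow_pos, Hx. Qed.

Lemma J_at_1 : J 1 = 0.
Proof. rewrite J_eq_RInt, RInt_point by lra. reflexivity. Qed.

Lemma RInt_xpow_derivable (x : R) :
  0 < x -> derivable_pt_lim (fun z => RInt (xpow j) 1 z) x (xpow j x).
Proof. intros Hx. apply (RInt_derivable _ 0); [lra|exact Hx|apply xpow_continuity]. Qed.

Lemma J_derivable (x : R) : 1 < x -> derivable_pt_lim J x (xpow j x).
Proof.
  intros Hx. apply (derivable_pt_lim_ext_right (fun z => RInt (xpow j) 1 z) J 1 x);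
    [exact Hx|intros y Hy; symmetry; apply J_eq_RInt; lra|apply RInt_xpow_derivable; lra].
Qed.

Lemma J_continue_in : continue_in J half_line 1.
Proof.
  apply (continue_in_agree _ _ J_eq_RInt).
  exact (derivable_continuous_pt _ _ (exist _ _ (RInt_xpow_derivable 1 Rlt_0_1))).
Qed.

End WeightPrimitive.

Lemma sqrt_close (r eps : R) : 0 < r -> Rabs (r ^ 2 - 1) < eps -> Rabs (r - 1) < eps.
Proof.
  intros Hr H. replace (r ^ 2 - 1) with ((r - 1) * (r + 1)) in H by ring.
  rewrite Rabs_mult, (Rabs_right (r + 1)) in H by lra.
  assert (0 <= Rabs (r - 1)) by apply Rabs_pos. nra.
Qed.

Lemma asymp_of_sq_ratio (f g : R -> R) :
  (exists M, forall x, M <= x -> 0 < f x / g x) ->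
  (forall eps, 0 < eps -> exists M, forall x, M <= x -> Rabs ((f x / g x) ^ 2 - 1) < eps) ->
  asymp f g.
Proof.
  intros [M0 Hpos] Hsq eps Heps. destruct (Hsq eps Heps) as [M1 HM1].
  exists (Rmax M0 M1). intros x Hx.
  apply sqrt_close; [apply Hpos|apply HM1];
    eapply Rle_trans; [|exact Hx| |exact Hx]; [apply Rmax_l|apply Rmax_r].
Qed.

Lemma asymp_ext (f g f' g' : R -> R) (M : R) :
  (forall x, M <= x -> f x = f' x /\ g x = g' x) -> asymp f g -> asymp f' g'.
Proof.
  intros Hfg Hasymp eps Heps. destruct (Hasymp eps Heps) as [M' HM'].
  exists (Rmax M M'). intros x Hx.
  destruct (Hfg x) as [<- <-]; [|apply HM']; eapply Rle_trans; [|exact Hx| |exact Hx];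
    [apply Rmax_l|apply Rmax_r].
Qed.

Lemma jump_asymp (k b : R) (p w J : R -> R) (M : R) : 0 < k -> 0 < b ->
  (forall x, M <= x -> 0 < p x /\ 0 < w x /\ 0 < J x) ->
  (forall eps, 0 < eps -> exists M', forall x, M' <= x -> Rabs (k * w x ^ 2 * J x - b) < eps) ->
  asymp (fun x => p x * w x) (fun x => sqrt (b / (k * J x)) * p x).
Proof.
  intros Hk Hb Hpos Hlim.
  assert (Hsq : forall x, M <= x ->
            (p x * w x / (sqrt (b / (k * J x)) * p x)) ^ 2 = (k * w x ^ 2 * J x) / b).
  { intros x Hx. destruct (Hpos x Hx) as (Hp & Hw & HJ).
    assert (Hq : 0 < b / (k * J x)) by (apply Rdiv_lt_0_compat; nra).
    assert (Hs := sqrt_lt_R0 _ Hq). assert (Hss := sqrt_sqrt _ (Rlt_le _ _ Hq)).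
    replace ((p x * w x / (sqrt (b / (k * J x)) * p x)) ^ 2)
      with (w x ^ 2 / (sqrt (b / (k * J x)) * sqrt (b / (k * J x)))) by (field; lra).
    rewrite Hss. field. repeat split; lra. }
  apply asymp_of_sq_ratio.
  - exists M. intros x Hx. destruct (Hpos x Hx) as (Hp & Hw & HJ).
    assert (0 < sqrt (b / (k * J x))) by (apply sqrt_lt_R0, Rdiv_lt_0_compat; nra).
    apply Rdiv_lt_0_compat; apply Rmult_lt_0_compat; lra.
  - intros eps Heps. destruct (Hlim (eps * b) ltac:(nra)) as [M' HM'].
    exists (Rmax M M'). intros x Hx.
    rewrite Hsq by (eapply Rle_trans; [apply Rmax_l|exact Hx]).
    replace (k * w x ^ 2 * J x / b - 1) with ((k * w x ^ 2 * J x - b) / b) by (field; lra).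
    unfold Rdiv. rewrite Rabs_mult, Rabs_inv, (Rabs_right b) by lra.
    apply (Rmult_lt_reg_r b); [exact Hb|].
    replace (Rabs (k * w x ^ 2 * J x - b) * / b * b) with (Rabs (k * w x ^ 2 * J x - b))
      by (field; lra).
    apply HM'. eapply Rle_trans; [apply Rmax_r|exact Hx].
Qed.

Lemma model_rate_pos (j : nat) (x : R) : 1 < x -> 0 < model_rate j x.
Proof.
  intros Hx. assert (Hp : forall y, 0 < Rpower x y) by (intros; apply exp_pos).
  destruct j as [|[|j]]; simpl.
  - apply Hp.
  - apply Rmult_lt_0_compat; [apply Rinv_0_lt_compat, sqrt_lt_R0; lra|apply Hp].
  - assert (0 < ln x) by (rewrite <- ln_1; apply ln_increasing; lra).
    apply Rmult_lt_0_compat; apply Rinv_0_lt_compat; [lra|apply sqrt_lt_R0; lra].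
Qed.

(* The model rate reproduces x^{-j/2} J(x)^{-1/2} up to a factor
   1 + O(x^{-1/2}): the squared ratio is x/(x-1), sqrt x/(sqrt x - 1), 1. *)
Lemma model_ratio_close (j : nat) (x : R) : (j <= 2)%nat -> 4 <= x ->
  Rabs (xpow j x ^ 2 / (RInt (xpow j) 1 x * model_rate j x ^ 2) - 1) <= / (sqrt x - 1).
Proof.
  intros Hj Hx.
  assert (Hs := sqrt_lt_R0 x ltac:(lra)). assert (Hxx := sqrt_sqrt x ltac:(lra)).
  assert (Hs2 : 2 <= sqrt x).
  { rewrite <- (sqrt_square 2) by lra. apply sqrt_le_1_alt. lra. }
  assert (Hinv : 0 < / (sqrt x - 1)) by (apply Rinv_0_lt_compat; lra).
  destruct j as [|[|[|j]]]; [| | |lia]; simpl model_rate.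
  - rewrite xpow_0, RInt_xpow_0 by lra.
    replace (Rpower x (-1/2)) with (/ sqrt x)
      by (replace (-1/2) with (- / 2) by field; rewrite Rpower_Ropp, Rpower_sqrt; lra).
    rewrite pow_inv, pow2_sqrt by lra.
    replace (1 ^ 2 / ((x - 1) * / x) - 1) with (/ (x - 1)) by (field; lra).
    rewrite Rabs_right by (apply Rle_ge, Rlt_le, Rinv_0_lt_compat; lra).
    apply Rinv_le_contravar; nra.
  - rewrite xpow_1, RInt_xpow_1 by lra.
    assert (H34 : Rpower x (-3/4) ^ 2 = / (x * sqrt x)).
    { replace (Rpower x (-3/4) ^ 2) with (Rpower x (-3/4) * Rpower x (-3/4)) by ring.
      rewrite <- Rpower_plus. replace (-3/4 + -3/4) with (- (1 + / 2)) by field.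
      rewrite Rpower_Ropp, Rpower_plus, Rpower_1, Rpower_sqrt by lra. reflexivity. }
    rewrite Rpow_mult_distr, H34, !pow_inv, !pow2_sqrt by lra.
    replace (/ x / ((2 * sqrt x - 2) * (/ 2 * / (x * sqrt x))) - 1)
      with (/ (sqrt x - 1)) by (field; repeat split; lra).
    rewrite Rabs_right by lra. lra.
  - rewrite xpow_2, RInt_xpow_2 by lra.
    assert (Hl : 0 < ln x) by (rewrite <- ln_1; apply ln_increasing; lra).
    rewrite Rpow_mult_distr, !pow_inv, pow2_sqrt by lra.
    replace (/ x ^ 2 / (ln x * (/ x ^ 2 * / ln x)) - 1) with 0 by (field; lra).
    rewrite Rabs_R0. lra.
Qed.

Lemma model_asymp (j : nat) (A : R) : (j <= 2)%nat -> 0 < A ->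
  asymp (fun x => sqrt (A / RInt (xpow j) 1 x) * xpow j x)
        (fun x => sqrt A * model_rate j x).
Proof.
  intros Hj HA.
  assert (Hsq : forall x, 2 <= x ->
    (sqrt (A / RInt (xpow j) 1 x) * xpow j x / (sqrt A * model_rate j x)) ^ 2
    = xpow j x ^ 2 / (RInt (xpow j) 1 x * model_rate j x ^ 2)).
  { intros x Hx. assert (HJ := RInt_xpow_pos j x ltac:(lra)).
    assert (Hm := model_rate_pos j x ltac:(lra)). assert (Hs := sqrt_lt_R0 A HA).
    assert (Hq : 0 < A / RInt (xpow j) 1 x) by (apply Rdiv_lt_0_compat; lra).
    assert (Hsq := sqrt_lt_R0 _ Hq).
    replace ((sqrt (A / RInt (xpow j) 1 x) * xpow j x / (sqrt A * model_rate j x)) ^ 2)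
      with (sqrt (A / RInt (xpow j) 1 x) * sqrt (A / RInt (xpow j) 1 x) * xpow j x ^ 2
            / (sqrt A * sqrt A * model_rate j x ^ 2)) by (field; lra).
    rewrite !sqrt_sqrt by lra. field. repeat split; lra. }
  apply asymp_of_sq_ratio.
  - exists 2. intros x Hx. assert (HJ := RInt_xpow_pos j x ltac:(lra)).
    assert (Hm := model_rate_pos j x ltac:(lra)). assert (Hp := xpow_pos j x).
    assert (0 < sqrt (A / RInt (xpow j) 1 x)) by (apply sqrt_lt_R0, Rdiv_lt_0_compat; lra).
    assert (0 < sqrt A) by (apply sqrt_lt_R0; lra).
    apply Rdiv_lt_0_compat; apply Rmult_lt_0_compat; lra.
  - intros eps Heps. assert (Hi : 0 < / eps) by (apply Rinv_0_lt_compat; lra).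
    exists (Rmax 4 ((2 + / eps) ^ 2)). intros x Hx.
    assert (Hx4 : 4 <= x) by (eapply Rle_trans; [apply Rmax_l|exact Hx]).
    assert (Hsx : 2 + / eps <= sqrt x).
    { rewrite <- (sqrt_pow2 (2 + / eps)) by (apply Rlt_le; lra). apply sqrt_le_1_alt.
      eapply Rle_trans; [apply Rmax_r|exact Hx]. }
    rewrite Hsq by lra. eapply Rle_lt_trans; [apply (model_ratio_close j x Hj Hx4)|].
    rewrite <- (Rinv_inv eps). apply Rinv_lt_contravar; [apply Rmult_lt_0_compat|]; lra.
Qed.

Import Defs.
Theorem mainTheorem5
  (gamma : R) (j : nat) (J v s tau : R -> R)
  (Hgamma : 1 < gamma) (Hj : (j <= 2)%nat)
  (HJ : forall x, 1 <= x -> is_RInt (fun r => xpow j r) 1 x (J x))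
  (Hv : C1_R v) (Hs : C1_half s) (Htau : C1_half tau)
  (Htau1 : tau 1 = 0)
  (Hshock : forall x, 1 < x ->
     derivable_pt_lim s x (1 - (gamma + 1) / 4 * v (tau x) * xpow j x))
  (Hchar : forall x, 1 <= x ->
     s x - tau x = x - 1 - (gamma + 1) / 2 * v (tau x) * J x) :
  (forall x, 1 <= x ->
     is_RInt v 0 (tau x) ((gamma + 1) / 4 * (v (tau x))^2 * J x))
  /\
  (forall b : R, 0 < b ->
     (exists M, forall x, M <= x -> 0 < v (tau x)) ->
     (forall eps, 0 < eps -> exists M, forall x, M <= x ->
        forall I, is_RInt v 0 (tau x) I -> Rabs (I - b) < eps) ->
     asymp (fun x => xpow j x * v (tau x))
           (fun x => sqrt (4 * b / ((gamma + 1) * J x)) * xpow j x)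
     /\
     asymp (fun x => sqrt (4 * b / ((gamma + 1) * J x)) * xpow j x)
           (fun x => sqrt (4 * b / (gamma + 1)) * model_rate j x)).
Proof.
  assert (Henergy : forall x, 1 <= x ->
            (gamma + 1) / 4 * v (tau x) ^ 2 * J x = RInt v 0 (tau x)).
  { destruct Hv as [dv [Hdv _]]. destruct Htau as [dtau [Htau_der [Htau_cont _]]].
    apply (energy_identity _ (xpow j) J v dv s tau dtau Hdv Htau_der (Htau_cont 1 (Rle_refl 1))
             Htau1 (J_derivable j J HJ) (J_continue_in j J HJ) (J_at_1 j J HJ) Hshock).
    intros x Hx. rewrite Hchar by exact Hx. field. }
  assert (Hmass : forall x, 1 <= x ->
            is_RInt v 0 (tau x) ((gamma + 1) / 4 * v (tau x) ^ 2 * J x)).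
  { intros x Hx. rewrite Henergy by exact Hx.
    apply is_RInt_of_continuity. intros t _. apply C1_R_continuity, Hv. }
  split; [exact Hmass|]. intros b Hb [M Hw] Hlim. split.
  - apply (asymp_ext (fun x => xpow j x * v (tau x))
             (fun x => sqrt (b / ((gamma + 1) / 4 * J x)) * xpow j x) _ _ 2).
    { intros x Hx. split; [reflexivity|]. assert (HJx := J_pos j J HJ x ltac:(lra)).
      do 2 f_equal. field. lra. }
    apply (jump_asymp _ b (xpow j) (fun x => v (tau x)) J (Rmax M 2)); [lra|exact Hb| |].
    + intros x Hx. assert (HM := Rmax_l M 2). assert (H2 := Rmax_r M 2).
      split; [apply xpow_pos|split; [apply Hw|apply (J_pos j J HJ)]; lra].
    + intros eps Heps. destruct (Hlim eps Heps) as [M' HM'].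
      exists (Rmax M' 1). intros x Hx. assert (HM := Rmax_l M' 1). assert (H1 := Rmax_r M' 1).
      apply (HM' x); [lra|apply Hmass; lra].
  - apply (asymp_ext (fun x => sqrt (4 * b / (gamma + 1) / RInt (xpow j) 1 x) * xpow j x)
             (fun x => sqrt (4 * b / (gamma + 1)) * model_rate j x) _ _ 2).
    { intros x Hx. split; [|reflexivity]. assert (HJx := J_pos j J HJ x ltac:(lra)).
      rewrite <- (J_eq_RInt j J HJ) by lra. do 2 f_equal. field. lra. }
    apply model_asymp; [exact Hj|apply Rdiv_lt_0_compat; lra].
Qed.
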